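(* Let $k\ge1$, $A,B_1,\dots,B_k,C_1,\dots,C_k\in\mathbb{C}^{r\times r}$ with $AB_j=B_jA$, $B_jB_l=B_lB_j$, $C_jC_l=C_lC_j$ for all $j,l$, and $C_j+mI$ invertible for all $m\ge0$ and all $j$. Fix $i$ and $n\ge1$ and suppose $C_i-mI$ is invertible for all $0\le m\le n$. Then $$F_{\mathcal A}[C_i-nI]=F_{\mathcal A}+x_iAB_i\Big[\sum_{n_1=1}^nF_{\mathcal A}[A+I,\,B_i+I,\,C_i+(2-n_1)I]\,(C_i-n_1I)^{-1}(C_i-(n_1-1)I)^{-1}\Big].$$
   Context: For $M\in\mathbb{C}^{r\times r}$: $(M)_0=I$, $(M)_m=M(M+I)\cdots(M+(m-1)I)$, $(M)^{-1}_m=((M)_m)^{-1}$. $$F_{\mathcal A}=F_{\mathcal A}[A,B_1,\dots,B_k;C_1,\dots,C_k;x_1,\dots,x_k]=\sum_{m_1,\dots,m_k\ge0}(A)_{m_1+\cdots+m_k}\prod_{j=1}^k(B_j)_{m_j}\prod_{j=1}^k(C_j)^{-1}_{m_j}\prod_{j=1}^k\frac{x_j^{m_j}}{m_j!},$$ $x_j$ scalar variables, matrix products in order of increasing index; identities are of formal power series in the $x_j$. $F_{\mathcal A}[\dots]$ lists only the shifted parameters, all others unchanged. *)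

From HB Require Import structures.
From mathcomp Require Import all_boot all_order all_algebra.
From mathcomp Require Import reals complex.
Set Implicit Arguments. Unset Strict Implicit. Unset Printing Implicit Defensive.
Import Order.TTheory GRing.Theory Num.Theory.
Local Open Scope ring_scope.

Fixpoint mpoch (F : comPzRingType) (r : nat) (M : 'M[F]_r) (m : nat) : 'M[F]_r :=
  match m with
  | 0 => 1%:M
  | m'.+1 => mpoch M m' *m (M + (m'%:R)%:M)
  end.

Definition mpochinv (F : comUnitRingType) (r : nat) (M : 'M[F]_r) (m : nat) : 'M[F]_r :=
  invmx (mpoch M m).

Notation multi k := {ffun 'I_k -> nat}.

(* Coefficient of x_1^{m_1}...x_k^{m_k} in the formal power series
   F_A[A, B_1..B_k; C_1..C_k; x_1..x_k]; matrix products in increasing index order. *)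
Definition FAcoef (F : fieldType) (r k : nat) (A : 'M[F]_r) (B C : 'I_k -> 'M[F]_r)
  (m : multi k) : 'M[F]_r :=
  ((\prod_(j < k) (m j)`!)%:R)^-1 *:
  (mpoch A (\sum_(j < k) m j)
   *m (\big[mulmx/1%:M]_(j < k) mpoch (B j) (m j))
   *m (\big[mulmx/1%:M]_(j < k) mpochinv (C j) (m j))).

(* Multi-index m - e_i (only used when m i >= 1). *)
Definition mdec (k : nat) (m : multi k) (i : 'I_k) : multi k :=
  [ffun j => if j == i then (m j).-1 else m j].

Definition mupd (F : pzRingType) (r k : nat) (B : 'I_k -> 'M[F]_r) (i : 'I_k) (X : 'M[F]_r)
  : 'I_k -> 'M[F]_r := fun j => if j == i then X else B j.

Definition Cc (R : realType) := (R[i])%type.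

From HB Require Import structures.
From mathcomp Require Import all_boot all_order all_algebra.
From mathcomp Require Import reals complex.
Import Order.TTheory GRing.Theory Num.Theory.
Local Open Scope ring_scope.

(* Fix a multi-index m.  If m_i = 0 the coefficient of
   x^m does not involve C_i, so both sides agree.  If m_i = p + 1, every factor
   of the coefficient splits off its i-th part:
     (A)_{|m|} = A (A + 1)_{|m|-1},   (B_i)_{p+1} = B_i (B_i + 1)_p,
   and replacing C_i by a matrix X commuting with all C_j multiplies the product
   of inverse Pochhammer symbols on the left by (X)_{p+1}^{-1} (C_i)_{p+1}.
   The theorem is thereby reduced to an identity about a single matrix C,
     (C - n)_{p+1}^{-1} (C)_{p+1} - 1
       = (p + 1) sum_{n1=1}^{n} (C + 2 - n1)_p^{-1} (C)_{p+1} (C - n1)^{-1} (C - n1 + 1)^{-1},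
   obtained by telescoping the two-term identity
     (D)_{p+1}^{-1} - (D + 1)_{p+1}^{-1} = (p + 1) (D + 2)_p^{-1} D^{-1} (D + 1)^{-1}.
   All commutation side conditions are discharged through bicommutants: the
   bicommutant of a pairwise commuting family is a commutative subring closed
   under inverses, and it contains every Pochhammer symbol built from the family. *)

Set Implicit Arguments. Unset Strict Implicit.

Section Bicommutant.
Variable T : unitRingType.
Implicit Types (P : T -> Prop) (x y z : T).

Definition pairwise_comm P := forall z w, P z -> P w -> GRing.comm z w.

Definition bicomm P x := forall y, (forall z, P z -> GRing.comm y z) -> GRing.comm x y.

Lemma bicomm_mem P z : pairwise_comm P -> P z -> bicomm P z.
Proof. by move=> hP Pz y hy; apply/commr_sym/hy. Qed.

Lemma bicomm_comm P x y :
  pairwise_comm P -> bicomm P x -> bicomm P y -> GRing.comm x y.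
Proof. by move=> hP hx hy; apply: hx => z Pz; apply: hy => w Pw; apply: hP. Qed.

Lemma bicommM P x y : bicomm P x -> bicomm P y -> bicomm P (x * y).
Proof.
by move=> hx hy z hz; apply/commr_sym/commrM; apply/commr_sym; [exact: hx|exact: hy].
Qed.

Lemma bicommD P x y : bicomm P x -> bicomm P y -> bicomm P (x + y).
Proof.
by move=> hx hy z hz; apply/commr_sym/commrD; apply/commr_sym; [exact: hx|exact: hy].
Qed.

Lemma bicommN P x : bicomm P x -> bicomm P (- x).
Proof. by move=> hx z hz; apply/commr_sym/commrN; apply/commr_sym; exact: hx. Qed.

Lemma bicommB P x y : bicomm P x -> bicomm P y -> bicomm P (x - y).
Proof. by move=> hx hy; apply: bicommD => //; apply: bicommN. Qed.

Lemma bicommV P x : bicomm P x -> bicomm P x^-1.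
Proof. by move=> hx z hz; apply/commr_sym/commrV; apply/commr_sym; exact: hx. Qed.

Lemma bicomm_nat P n : bicomm P n%:R.
Proof. by move=> z _; apply/commr_sym/commr_nat. Qed.

Lemma bicomm1 P : bicomm P 1.
Proof. by move=> z _; apply/commr_sym/commr1. Qed.

Lemma singleton_pairwise_comm x : pairwise_comm (eq^~ x).
Proof. by move=> z w -> ->; apply: commr_refl. Qed.

Lemma bicomm_self x : bicomm (eq^~ x) x.
Proof. by apply: bicomm_mem => //; apply: singleton_pairwise_comm. Qed.

End Bicommutant.

Section Pochhammer.
Variables (F : comUnitRingType) (r' : nat).
Local Notation M := 'M[F]_r'.+1.

Lemma mpochS (X : M) m : mpoch X m.+1 = mpoch X m * (X + m%:R).
Proof. by rewrite /= rmorph_nat. Qed.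

Lemma mpoch_shift (X : M) m : mpoch X m.+1 = X * mpoch (X + 1) m.
Proof.
elim: m => [|m IH]; first by rewrite mpochS /= mulr0n addr0 mul1r mulr1.
by rewrite mpochS IH mpochS -mulrA -addrA -mulrS.
Qed.

Lemma mpoch_unit (X : M) m :
  (forall s, (s < m)%N -> X + s%:R \is a GRing.unit) -> mpoch X m \is a GRing.unit.
Proof.
elim: m => [|m IH] hX; first exact: unitr1.
rewrite mpochS unitrMl; last exact: hX.
by apply: IH => s hs; apply: hX; apply: ltnW.
Qed.

Lemma mpochinvE (X : M) m : mpochinv X m = (mpoch X m)^-1.
Proof. by []. Qed.

Lemma bicomm_mpoch (P : M -> Prop) X m : bicomm P X -> bicomm P (mpoch X m).
Proof.
move=> hX; elim: m => [|m IH]; first exact: bicomm1.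
by rewrite mpochS; apply: bicommM => //; apply: bicommD => //; apply: bicomm_nat.
Qed.

Lemma bicomm_mpochinv (P : M -> Prop) X m : bicomm P X -> bicomm P (mpochinv X m).
Proof. by move=> hX; apply: bicommV; apply: bicomm_mpoch. Qed.

End Pochhammer.

Section OrderedProduct.
Variables (F : pzRingType) (r' : nat).
Local Notation M := 'M[F]_r'.+1.

Lemma bigmul_pull_seq k (G G' : 'I_k -> M) (i : 'I_k) (X : M) (s : seq 'I_k) :
  (forall j, j != i -> G' j = G j) -> G' i = X * G i ->
  (forall j, j != i -> GRing.comm X (G j)) -> uniq s ->
  \big[mulmx/1%:M]_(j <- s) G' j =
  if i \in s then X * \big[mulmx/1%:M]_(j <- s) G j
  else \big[mulmx/1%:M]_(j <- s) G j.
Proof.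
move=> hG hi hX; elim: s => [|a s IH]; first by rewrite !big_nil.
rewrite /= => /andP[an us]; rewrite !big_cons in_cons IH //.
have [eai|ai] := eqVneq a i.
  by subst a; rewrite (negPf an) hi -[LHS]/(X * G i * _) -mulrA.
rewrite /= hG //; case: (i \in s) => //.
by rewrite -[LHS]/(G a * (X * _)) mulrA -(hX a ai) -mulrA.
Qed.

Lemma bigmul_pull k (G G' : 'I_k -> M) (i : 'I_k) (X : M) :
  (forall j, j != i -> G' j = G j) -> G' i = X * G i ->
  (forall j, j != i -> GRing.comm X (G j)) ->
  \big[mulmx/1%:M]_(j < k) G' j = X * \big[mulmx/1%:M]_(j < k) G j.
Proof.
move=> hG hi hX.
by rewrite (bigmul_pull_seq hG hi hX (index_enum_uniq _)) mem_index_enum.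
Qed.

End OrderedProduct.

Section Telescoping.
Variables (F : comUnitRingType) (r' : nat).
Local Notation M := 'M[F]_r'.+1.

Lemma mpochinv_diff (D : M) p :
  (forall s, D + s%:R \is a GRing.unit) ->
  (mpoch D p.+1)^-1 - (mpoch (D + 1) p.+1)^-1 =
  p.+1%:R * (mpoch (D + 2%:R) p)^-1 * D^-1 * (D + 1)^-1.
Proof.
move=> hD; set Q := mpoch (D + 2%:R) p.
have commD := bicomm_comm (singleton_pairwise_comm (x := D)).
have bD := bicomm_self (x := D).
have bD1 : bicomm (eq^~ D) (D + 1) by apply: bicommD => //; apply: bicomm1.
have eQ : mpoch (D + 1) p.+1 = (D + 1) * Q by rewrite mpoch_shift -addrA -mulr2n.
have eP : mpoch D p.+1 * (D + p.+1%:R) = D * ((D + 1) * Q).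
  by rewrite -mpochS mpoch_shift eQ.
have uD : D \is a GRing.unit by have := hD 0%N; rewrite addr0.
have uD1 : D + 1 \is a GRing.unit by apply: hD 1%N.
have uQ : Q \is a GRing.unit.
  by apply: mpoch_unit => s _; rewrite -addrA -natrD; apply: hD.
have uW : D * ((D + 1) * Q) \is a GRing.unit by rewrite unitrMl ?unitrMl.
have uP : mpoch D p.+1 \is a GRing.unit by apply: mpoch_unit => s _; apply: hD.
have uP1 : mpoch (D + 1) p.+1 \is a GRing.unit by rewrite eQ unitrMl.
have cP1 : GRing.comm (mpoch (D + 1) p.+1)^-1 D.
  by apply: commD => //; apply: bicommV; apply: bicomm_mpoch.
have cD1 : GRing.comm (D + 1)^-1 D by apply: commD => //; apply: bicommV.
apply: (mulIr uW); rewrite mulrBl -{1}eP (mulKr uP) -eQ.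
rewrite [_^-1 * (D * _)]mulrA cP1 -[D * _ * _]mulrA (mulVr uP1).
rewrite mulr1 addrAC subrr add0r eQ.
rewrite -!mulrA [(D + 1)^-1 * (D * _)]mulrA cD1 -mulrA.
by rewrite mulKr // mulKr // mulVr // mulr1.
Qed.

Lemma shifted_units (C : M) a :
  (forall s, C + s%:R \is a GRing.unit) ->
  (forall s, (s <= a)%N -> C - s%:R \is a GRing.unit) ->
  forall s, (C - a%:R) + s%:R \is a GRing.unit.
Proof.
move=> hC hCa s; case: (leqP s a) => hs.
  have -> : C - a%:R + s%:R = C - (a - s)%:R.
    by rewrite natrB // opprB addrA [RHS]addrAC.
  by apply: hCa; apply: leq_subr.
have -> : C - a%:R + s%:R = C + (s - a)%:R.
  by rewrite natrB ?(ltnW hs) // addrA [LHS]addrAC.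
exact: hC.
Qed.

(* Telescoping mpochinv_diff along D = C - t - 1, t < n:
   (C-n)_{p+1}^{-1} (C)_{p+1} - 1
     = (p+1) sum_{n1=1}^{n} (C+2-n1)_p^{-1} (C)_{p+1} (C-n1)^{-1} (C-n1+1)^{-1}. *)
Lemma mpoch_ratio_telescope (C : M) n p :
  (forall s, C + s%:R \is a GRing.unit) ->
  (forall s, (s <= n)%N -> C - s%:R \is a GRing.unit) ->
  (mpoch (C - n%:R) p.+1)^-1 * mpoch C p.+1 - 1 =
  \sum_(1 <= n1 < n.+1) ((mpoch (C + 2%:R - n1%:R) p)^-1 * mpoch C p.+1
      * (C - n1%:R)^-1 * (C - n1.-1%:R)^-1) *+ p.+1.
Proof.
move=> hC hCn; set E := fun t : nat => (mpoch (C - t%:R) p.+1)^-1.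
set P := mpoch C p.+1.
have uP : P \is a GRing.unit by apply: mpoch_unit => s _; apply: hC.
have bC := bicomm_self (x := C).
rewrite -[X in _ * _ - X](mulVr uP).
have -> : P^-1 = E 0%N by rewrite /E subr0.
rewrite -[(mpoch _ _)^-1]/(E n) -mulrBl -(telescope_sumr E (leq0n n)).
rewrite big_add1 /= mulr_suml; apply: eq_big_nat => t /andP[_ htn].
set D := C - t.+1%:R.
have hD : forall s, D + s%:R \is a GRing.unit.
  by apply: shifted_units => // s hs; apply: hCn; apply: leq_trans hs htn.
have eD1 : C - t%:R = D + 1 by rewrite /D mulrS opprD addrA [RHS]addrAC subrK.
have eD2 : C + 2%:R - t.+1%:R = D + 2%:R by rewrite /D addrAC.
have bD : bicomm (eq^~ C) D by apply: bicommB => //; apply: bicomm_nat.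
have cP : GRing.comm P (D^-1 * (D + 1)^-1).
  apply: (bicomm_comm (singleton_pairwise_comm (x := C))); first exact: bicomm_mpoch.
  by apply: bicommM; apply: bicommV => //; apply: bicommD => //; apply: bicomm1.
rewrite /E -/D eD1 eD2 mpochinv_diff //; clearbody P.
rewrite -!mulrA mulr_natl; congr (_ *+ _); congr (_ * _).
by rewrite [LHS]mulrA -cP.
Qed.

End Telescoping.

(* Distributing the identity X - 1 = sum_n1 (p+1) Y n1 W1 n1 W2 n1 through a
   scaled product; this is the final bookkeeping step of the theorem. *)
Lemma scaled_expand (K : comPzRingType) (V : algType K) (s s' : K)
    (A Bi PA PB QC X : V) (Y W1 W2 : nat -> V) (lo hi p : nat) :
  GRing.comm Bi PA -> (forall n1, GRing.comm QC (W1 n1 * W2 n1)) ->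
  X - 1 = \sum_(lo <= n1 < hi) (Y n1 * W1 n1 * W2 n1) *+ p.+1 ->
  s * p.+1%:R = s' ->
  s *: (A * PA * (Bi * PB) * (X * QC)) =
  s *: (A * PA * (Bi * PB) * QC) +
  A * Bi * \sum_(lo <= n1 < hi) (s' *: (PA * PB * (Y n1 * QC)) * W1 n1 * W2 n1).
Proof.
move=> cBA cQW eX hs; set Z := A * PA * (Bi * PB).
rewrite -[LHS](subrK (s *: (Z * QC))) addrC; congr (_ + _).
rewrite -scalerBr -mulrBr -[X in _ - X]mul1r -mulrBl eX.
rewrite mulr_suml mulr_sumr scaler_sumr mulr_sumr; apply: eq_bigr => n1 _.
rewrite mulrnAl mulrnAr -scaler_nat scalerA hs -!scalerAl -scalerAr.
congr (_ *: _); rewrite /Z -!mulrA (cQW n1) -!mulrA.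
by rewrite [Bi * (PA * _)]mulrA cBA -mulrA.
Qed.

Section MultiIndex.
Variables (k : nat) (m : multi k) (i : 'I_k).

Lemma mdec_id : mdec m i i = (m i).-1.
Proof. by rewrite /mdec ffunE eqxx. Qed.

Lemma mdec_other j : j != i -> mdec m i j = m j.
Proof. by move=> hj; rewrite /mdec ffunE (negPf hj). Qed.

Hypothesis hmi : (0 < m i)%N.

Lemma sum_mdec : (\sum_(j < k) m j = (\sum_(j < k) mdec m i j).+1)%N.
Proof.
rewrite (bigD1 i) //= [in RHS](bigD1 i) //= mdec_id -addSn prednK //.
by congr (_ + _)%N; apply: eq_bigr => j hj; rewrite mdec_other.
Qed.

Lemma fact_mdec : (\prod_(j < k) (m j)`! = m i * \prod_(j < k) (mdec m i j)`!)%N.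
Proof.
rewrite (bigD1 i) //= [in RHS](bigD1 i) //= mdec_id -{1}(prednK hmi) factS.
rewrite prednK // [RHS]mulnA.
by congr (_ * _)%N; apply: eq_bigr => j hj; rewrite mdec_other.
Qed.

End MultiIndex.

Section Coefficients.
Variables (F : fieldType) (r' k : nat).
Local Notation M := 'M[F]_r'.+1.
Variables (A : M) (B C : 'I_k -> M).
Hypotheses (char_F0 : [pchar F] =i pred0)
  (hAB : forall j, GRing.comm A (B j))
  (hBB : forall j l, GRing.comm (B j) (B l))
  (hCC : forall j l, GRing.comm (C j) (C l)).

Let numer (z : M) := z = A \/ exists j, z = B j.
Let denom (z : M) := exists j, z = C j.

Let numer_comm : pairwise_comm numer.
Proof.
move=> z w [->|[j ->]] [->|[l ->]]; [exact: commr_refl|exact: hAB| |exact: hBB].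
exact/commr_sym/hAB.
Qed.

Let denom_comm : pairwise_comm denom.
Proof. by move=> z w [j ->] [l ->]; apply: hCC. Qed.

Let bicomm_A : bicomm numer A.
Proof. by apply: bicomm_mem => //; left. Qed.

Let bicomm_B j : bicomm numer (B j).
Proof. by apply: bicomm_mem => //; right; exists j. Qed.

Let bicomm_C j : bicomm denom (C j).
Proof. by apply: bicomm_mem => //; exists j. Qed.

Lemma bigmulB_mdec (m : multi k) i : (0 < m i)%N ->
  \big[mulmx/1%:M]_(j < k) mpoch (B j) (m j) =
  B i * \big[mulmx/1%:M]_(j < k) mpoch (mupd B i (B i + 1%:M) j) (mdec m i j).
Proof.
move=> hmi; apply: (bigmul_pull (i := i)).
- by move=> j hj; rewrite /mupd (negPf hj) mdec_other.
- by rewrite /mupd eqxx mdec_id -mpoch_shift prednK.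
- move=> j hj; rewrite /mupd (negPf hj).
  by apply: (bicomm_comm numer_comm) => //; apply: bicomm_mpoch.
Qed.

Lemma bigmulC_upd (m m' : multi k) i X :
  (forall j, j != i -> m' j = m j) -> bicomm denom X ->
  mpoch (C i) (m i) \is a GRing.unit ->
  \big[mulmx/1%:M]_(j < k) mpochinv (mupd C i X j) (m' j) =
  ((mpoch X (m' i))^-1 * mpoch (C i) (m i)) *
  \big[mulmx/1%:M]_(j < k) mpochinv (C j) (m j).
Proof.
move=> hm bX uP; apply: (bigmul_pull (i := i)).
- by move=> j hj; rewrite /mupd (negPf hj) hm.
- by rewrite /mupd eqxx !mpochinvE -mulrA divrr ?mulr1.
- move=> j hj; apply: (bicomm_comm denom_comm); last exact: bicomm_mpochinv.
  by apply: bicommM; [apply: bicommV|]; apply: bicomm_mpoch.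
Qed.

Lemma FAcoef_upd_zero (m : multi k) i X :
  m i = 0%N -> FAcoef A B (mupd C i X) m = FAcoef A B C m.
Proof.
move=> hmi; rewrite /FAcoef; congr (_ *: (_ *m _)); apply: eq_bigr => j _.
by rewrite /mupd; case: eqVneq => // ->; rewrite hmi.
Qed.

Lemma FAcoef_contiguity (m : multi k) i n p :
  (forall j (s : nat), C j + (s%:R)%:M \in unitmx) ->
  (forall s : nat, (s <= n)%N -> C i - (s%:R)%:M \in unitmx) ->
  m i = p.+1 ->
  FAcoef A B (mupd C i (C i - (n%:R)%:M)) m =
  FAcoef A B C m +
  A *m B i *m
  (\sum_(1 <= n1 < n.+1)
     FAcoef (A + 1%:M) (mupd B i (B i + 1%:M))
            (mupd C i (C i + 2%:R%:M - (n1%:R)%:M)) (mdec m i)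
     *m invmx (C i - (n1%:R)%:M)
     *m invmx (C i - ((n1.-1)%:R)%:M)).
Proof.
move=> hC hCi hmi.
have hCu j s : C j + s%:R \is a GRing.unit by have := hC j s; rewrite rmorph_nat.
have hCiu s : (s <= n)%N -> C i - s%:R \is a GRing.unit.
  by move=> hs; have := hCi s hs; rewrite rmorph_nat.
have mi_gt0 : (0 < m i)%N by rewrite hmi.
have uP : mpoch (C i) (m i) \is a GRing.unit.
  by apply: mpoch_unit => s _; apply: hCu.
have bCi := bicomm_C i.
have denomRHS n1 :
  \big[mulmx/1%:M]_(j < k)
    mpochinv (mupd C i (C i + 2%:R%:M - (n1%:R)%:M) j) (mdec m i j) =
  ((mpoch (C i + 2%:R - n1%:R) p)^-1 * mpoch (C i) p.+1) *
  \big[mulmx/1%:M]_(j < k) mpochinv (C j) (m j).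
  rewrite !rmorph_nat (bigmulC_upd (m := m) _ _ uP) ?mdec_id ?hmi //.
  - exact: mdec_other.
  - by apply: bicommB; [apply: bicommD => //|]; apply: bicomm_nat.
rewrite /FAcoef (sum_mdec mi_gt0) mpoch_shift (bigmulB_mdec mi_gt0).
rewrite (fact_mdec mi_gt0) (bigmulC_upd (m' := m) (fun _ _ => erefl) _ uP); last first.
  by rewrite rmorph_nat; apply: bicommB => //; apply: bicomm_nat.
under [X in A *m B i *m X]eq_bigr => n1 _ do rewrite denomRHS !rmorph_nat.
rewrite hmi; apply: scaled_expand.
- apply: (bicomm_comm numer_comm); first exact: bicomm_B.
  by apply/bicomm_mpoch/bicommD; [exact: bicomm_A|exact: bicomm1].
- move=> n1; apply: (bicomm_comm denom_comm).
    apply: big_ind; [exact: bicomm1|exact: bicommM|].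
    by move=> j _; apply/bicomm_mpochinv/bicomm_C.
  by apply: bicommM; apply: bicommV; apply: bicommB => //; apply: bicomm_nat.
- by rewrite rmorph_nat; apply: mpoch_ratio_telescope.
- by rewrite natrM invfM mulrAC mulVf ?mul1r // ((pcharf0P F).1 char_F0).
Qed.

End Coefficients.

Unset Implicit Arguments.

Theorem mainTheorem4 (R : realType) (r k : nat)
  (A : 'M[R[i]]_r) (B C : 'I_k -> 'M[R[i]]_r)
  (hAB : forall j, A *m B j = B j *m A)
  (hBB : forall j l, B j *m B l = B l *m B j)
  (hCC : forall j l, C j *m C l = C l *m C j)
  (hC : forall j (m : nat), C j + (m%:R)%:M \in unitmx)
  (i : 'I_k) (n : nat) (hn : (1 <= n)%N)
  (hCi : forall m : nat, (m <= n)%N -> C i - (m%:R)%:M \in unitmx) :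
  forall m : multi k,
    FAcoef A B (mupd C i (C i - (n%:R)%:M)) m =
    FAcoef A B C m +
    (if (0 < m i)%N then
       A *m B i *m
       (\sum_(1 <= n1 < n.+1)
          FAcoef (A + 1%:M) (mupd B i (B i + 1%:M))
                 (mupd C i (C i + 2%:R%:M - (n1%:R)%:M)) (mdec m i)
          *m invmx (C i - (n1%:R)%:M)
          *m invmx (C i - ((n1.-1)%:R)%:M))
     else 0).
(* Over 0 x 0 matrices there is nothing to prove; otherwise split on m_i. *)
Proof.
move=> m; case: r A B C hAB hBB hCC hC hCi => [|r'] A B C hAB hBB hCC hC hCi.
  by apply/matrixP => -[].
case hmi: (m i) => [|p] /=.
  by rewrite addr0 FAcoef_upd_zero.
by apply: (FAcoef_contiguity (pchar_num _) _ _ _ hC hCi hmi).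
Qed.
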